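(* Let $C=(c_{k,j})\in\mathbb{R}_{\max}^{p\times n}$, $\mu^+\in\mathbb{Z}_{\ge0}^p$, $\mu^-\in\mathbb{Z}_{\ge0}^n$ and $f(x)=\sum_{k=1}^p\mu^+_k\max_{j\in[n]}(c_{k,j}+x_j)-\sum_{j=1}^n\mu^-_jx_j$. Then: (1) $f(\alpha\otimes x)=f(x)+\alpha\big(\sum_{k\in[p]}\mu^+_k-\sum_{j\in[n]}\mu^-_j\big)$ for any $x\in\mathbb{R}_{\max}^n$ and $\alpha\in\mathbb{R}$; (2) $f(x)+f(y)\ge f(x\oplus y)+f(x\oplus' y)$ for any $x,y\in\mathbb{R}_{\max}^n$.
   Context: $\mathbb{R}_{\max}=\mathbb{R}\cup\{-\infty\}$; $\alpha\otimes x$ is the vector with entries $\alpha+x_j$; $x\oplus y$ and $x\oplus' y$ are the entrywise maximum and minimum of $x$ and $y$. The identities are understood for vectors on which $f$ is well defined. *)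

From mathcomp Require Import all_boot all_order all_algebra.
From mathcomp Require Import constructive_ereal reals.
Set Implicit Arguments. Unset Strict Implicit. Unset Printing Implicit Defensive.
Import Order.TTheory GRing.Theory Num.Theory.
Local Open Scope ring_scope.
Local Open Scope ereal_scope.

(* Elements of R_max = R ∪ {-oo} are modeled as extended reals different
   from +oo. Vectors in R_max^n are functions 'I_n -> \bar R. *)
Definition is_Rmax (R : realType) (n : nat) (x : 'I_n -> \bar R) : Prop :=
  forall j, x j != +oo.

Definition rowmax (R : realType) (p n : nat) (C : 'I_p -> 'I_n -> \bar R)
  (x : 'I_n -> \bar R) (k : 'I_p) : \bar R :=
  \big[maxe/-oo]_(j < n) (C k j + x j).

Definition fpos (R : realType) (p n : nat) (C : 'I_p -> 'I_n -> \bar R)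
  (mup : 'I_p -> nat) (x : 'I_n -> \bar R) : \bar R :=
  \sum_(k < p) ((mup k)%:R)%:E * rowmax C x k.

Definition fneg (R : realType) (n : nat) (mum : 'I_n -> nat)
  (x : 'I_n -> \bar R) : \bar R :=
  \sum_(j < n) ((mum j)%:R)%:E * x j.

Definition ftrop (R : realType) (p n : nat) (C : 'I_p -> 'I_n -> \bar R)
  (mup : 'I_p -> nat) (mum : 'I_n -> nat) (x : 'I_n -> \bar R) : \bar R :=
  fpos C mup x - fneg mum x.

(* f is well defined at x: no (-oo) - (-oo), i.e. not (-oo) + (+oo). *)
Definition f_welldef (R : realType) (p n : nat) (C : 'I_p -> 'I_n -> \bar R)
  (mup : 'I_p -> nat) (mum : 'I_n -> nat) (x : 'I_n -> \bar R) : Prop :=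
  ~ (fpos C mup x = -oo /\ fneg mum x = -oo).

(* alpha ⊗ x, x ⊕ y (entrywise max), x ⊕' y (entrywise min) *)
Definition tscale (R : realType) (n : nat) (a : R) (x : 'I_n -> \bar R) :
  'I_n -> \bar R := fun j => a%:E + x j.
Definition tplus (R : realType) (n : nat) (x y : 'I_n -> \bar R) :
  'I_n -> \bar R := fun j => maxe (x j) (y j).
Definition tmin (R : realType) (n : nat) (x y : 'I_n -> \bar R) :
  'I_n -> \bar R := fun j => mine (x j) (y j).

From mathcomp Require Import all_boot all_order all_algebra.
From mathcomp Require Import constructive_ereal reals.
Set Implicit Arguments. Unset Strict Implicit. Unset Printing Implicit Defensive.
Import Order.TTheory GRing.Theory Num.Theory.
Local Open Scope ring_scope.
Local Open Scope ereal_scope.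

(* Both parts hold term by term.  Shifting every x_j by a shifts each row
   maximum max_j (c_kj + x_j) by a.  For x ⊕ y the row maximum is the max of
   the row maxima for x and y, for x ⊕' y it is at most their min, and
   u (max s t) + u (min s t) = u s + u t for any u; hence the max-plus part of
   f is submodular and its linear part is modular.
   In \bar R the sum -oo + +oo is -oo, which makes the well-definedness
   hypotheses (and c_kj <> +oo) unnecessary: the only obstruction is
   distributing the negation over the linear part in (2), which needs
   x_j <> +oo. *)

Lemma addf_max_min {d : Order.disp_t} {T : orderType d} {V : nmodType}
    (u : T -> V) (s t : T) :
  (u (Order.max s t) + u (Order.min s t) = u s + u t)%R.
Proof. by rewrite maxEle minEle; case: ifP => _ //; exact: addrC. Qed.

Section ExtendedRealArithmetic.
Variable R : realType.
Implicit Types (a b c d : \bar R) (r s : R).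

Lemma adde_subACA a b c d : b +? d -> (a - b) + (c - d) = (a + c) - (b + d).
Proof. by move=> bd; rewrite oppeD // addeACA. Qed.

Lemma sube_addEFin a b r s : (a + r%:E) - (b + s%:E) = (a - b) + (r - s)%:E.
Proof. by rewrite fin_num_oppeD // addeACA. Qed.

Lemma sume_mul_addEFin (I : Type) (l : seq I) (w : I -> R) r (v : I -> \bar R) :
  \sum_(i <- l) (w i)%:E * (r%:E + v i) =
  \sum_(i <- l) (w i)%:E * v i + (r * \sum_(i <- l) w i)%:E.
Proof.
rewrite mulr_sumr -sumEFin -big_split /=; apply: eq_bigr => i _.
by rewrite muleDr ?fin_num_adde_defr // addeC -EFinM mulrC.
Qed.

End ExtendedRealArithmetic.

Section TropicalFunction.
Variables (R : realType) (p n : nat) (C : 'I_p -> 'I_n -> \bar R).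
Variables (mup : 'I_p -> nat) (mum : 'I_n -> nat).
Implicit Types (x y : 'I_n -> \bar R) (a : R).

Lemma rowmax_tscale x a k : rowmax C (tscale a x) k = a%:E + rowmax C x k.
Proof.
rewrite /rowmax /tscale; elim/big_rec2: _ => [|j u v _ ->]; first by rewrite addeNy.
by rewrite adde_maxr addeCA.
Qed.

Lemma rowmax_tplus x y k :
  rowmax C (tplus x y) k = maxe (rowmax C x k) (rowmax C y k).
Proof.
rewrite /rowmax /tplus; elim/big_rec3: _ => [|j u v w _ ->]; first by rewrite maxxx.
by rewrite adde_maxr maxACA.
Qed.

Lemma le_rowmax x y k : (forall j, x j <= y j) -> rowmax C x k <= rowmax C y k.
Proof.
move=> lexy; rewrite /rowmax; elim/big_rec2: _ => // j u v _ leuv.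
by apply: le_max2 => //; apply: leeD.
Qed.

Lemma rowmax_tmin_le x y k :
  rowmax C (tmin x y) k <= mine (rowmax C x k) (rowmax C y k).
Proof.
by rewrite le_min !le_rowmax // => j; rewrite /tmin ge_min lexx ?orbT.
Qed.

Lemma fpos_tscale x a :
  fpos C mup (tscale a x) = fpos C mup x + (a * \sum_(k < p) (mup k)%:R)%:E.
Proof.
by rewrite /fpos; under eq_bigr do rewrite rowmax_tscale; exact: sume_mul_addEFin.
Qed.

Lemma fneg_tscale x a :
  fneg mum (tscale a x) = fneg mum x + (a * \sum_(j < n) (mum j)%:R)%:E.
Proof. exact: sume_mul_addEFin. Qed.

Lemma ftrop_tscale x a :
  ftrop C mup mum (tscale a x) =
  ftrop C mup mum x + (a * (\sum_(k < p) (mup k)%:R - \sum_(j < n) (mum j)%:R))%:E.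
Proof. by rewrite /ftrop fpos_tscale fneg_tscale sube_addEFin mulrBr. Qed.

Lemma fpos_submodular x y :
  fpos C mup (tplus x y) + fpos C mup (tmin x y) <= fpos C mup x + fpos C mup y.
Proof.
rewrite /fpos -!big_split /=; apply: lee_sum => k _.
rewrite rowmax_tplus -[leRHS](addf_max_min (fun t => (mup k)%:R%:E * t)) /=.
by apply: leeD => //; apply: lee_wpmul2l; [rewrite lee_fin | exact: rowmax_tmin_le].
Qed.

Lemma fneg_modular x y :
  fneg mum (tplus x y) + fneg mum (tmin x y) = fneg mum x + fneg mum y.
Proof.
rewrite /fneg -!big_split /=; apply: eq_bigr => j _.
exact: (addf_max_min (fun t => (mum j)%:R%:E * t)).
Qed.

Lemma is_Rmax_tplus x y : is_Rmax x -> is_Rmax y -> is_Rmax (tplus x y).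
Proof. by move=> hx hy j; rewrite /tplus maxEle; case: ifP. Qed.

Lemma is_Rmax_tmin x y : is_Rmax x -> is_Rmax y -> is_Rmax (tmin x y).
Proof. by move=> hx hy j; rewrite /tmin minEle; case: ifP. Qed.

Lemma fneg_lt_pinfty x : is_Rmax x -> fneg mum x < +oo.
Proof.
move=> hx; apply: lte_sum_pinfty => j _.
by apply: lte_mul_pinfty; rewrite ?lee_fin ?ltey.
Qed.

Lemma fneg_adde_def x y : is_Rmax x -> is_Rmax y -> fneg mum x +? fneg mum y.
Proof.
by move=> hx hy; apply: ltpinfty_adde_def; rewrite inE; exact: fneg_lt_pinfty.
Qed.

Lemma ftrop_submodular x y : is_Rmax x -> is_Rmax y ->
  ftrop C mup mum (tplus x y) + ftrop C mup mum (tmin x y) <=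
  ftrop C mup mum x + ftrop C mup mum y.
Proof.
move=> hx hy; have hmax := is_Rmax_tplus hx hy; have hmin := is_Rmax_tmin hx hy.
rewrite /ftrop !adde_subACA ?fneg_adde_def // fneg_modular.
exact/leeD2r/fpos_submodular.
Qed.

End TropicalFunction.

Theorem proposition3p1 (R : realType) (p n : nat)
  (C : 'I_p -> 'I_n -> \bar R) (mup : 'I_p -> nat) (mum : 'I_n -> nat) :
  (forall k j, C k j != +oo) ->
  (forall (x : 'I_n -> \bar R) (a : R),
      is_Rmax x -> f_welldef C mup mum x ->
      ftrop C mup mum (tscale a x) =
      ftrop C mup mum x
      + (a * ((\sum_(k < p) (mup k)%:R) - (\sum_(j < n) (mum j)%:R)))%:E)
  /\
  (forall x y : 'I_n -> \bar R,
      is_Rmax x -> is_Rmax y ->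
      f_welldef C mup mum x -> f_welldef C mup mum y ->
      f_welldef C mup mum (tplus x y) -> f_welldef C mup mum (tmin x y) ->
      ftrop C mup mum (tplus x y) + ftrop C mup mum (tmin x y)
      <= ftrop C mup mum x + ftrop C mup mum y).
Proof.
move=> _; split=> [x a _ _ | x y hx hy _ _ _ _].
- exact: ftrop_tscale.
- exact: ftrop_submodular hx hy.
Qed.
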